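(* Let $\omega=(\omega_0,\dots,\omega_{l-1})\in\Psi^l$ be arbitrary. Then for every $x\in[n]$ we have $\mathrm{single}(x,\omega)=\tau(\omega,\{x\})$, and for all nonempty $A_1,A_2\subseteq[n]$ we have $\mathrm{merge}(\tau(\omega,A_1),\tau(\omega,A_2))=\tau(\omega,A_1\cup A_2)$.
   Context: Fix integers $n\ge1$, $l\ge1$, $b\ge1$, and a set $\Psi$ of triples $\psi=(f,g,h)$ of functions with $f:[n]\to\mathbb Z_{\ge0}$, $g:[n]\to[m]$, $h:[m]\to[b]$ for some $m$. Here $[N]:=\{0,\dots,N-1\}$. A state (sketch) is a pair $(B,q)$ with $B:[l]\times[b]\to\mathbb Z$ a table and $q\in\mathbb Z_{\ge0}$. $\mathrm{compress}(B,q)$: while $\sum_{i\in[l],j\in[b]}\lfloor\log_2(B[i,j]+2)\rfloor>33\,b\,l$, set $q\gets q+1$ and $B[i,j]\gets\max(B[i,j]-1,-1)$ for all $i,j$; then return $(B,q)$. $\mathrm{single}(x,\omega)$: let $B[i,j]=-1$ for all $i,j$, then for each $i\in[l]$ with $\omega_i=(f,g,h)$ set $B[i,h(g(x))]=f(x)$; return $\mathrm{compress}(B,0)$. $\mathrm{merge}((B_a,q_a),(B_b,q_b))$: $q\gets\max(q_a,q_b)$, $B[i,j]\gets\max(B_a[i,j]+q_a-q,\;B_b[i,j]+q_b-q)$ for all $i,j$; return $\mathrm{compress}(B,q)$. For nonempty $A\subseteq[n]$: $\tau_0((f,g,h),A)[j]:=\max(\{f(a): a\in A,\ h(g(a))=j\}\cup\{-1\})$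 for $j\in[b]$; $\tau_1(\psi,A,q)[j]:=\max(\tau_0(\psi,A)[j]-q,-1)$; $\tau_2(\omega,A,q)[i,j]:=\tau_1(\omega_i,A,q)[j]$; $q(\omega,A):=\min\{q\in\mathbb Z_{\ge0}: \sum_{i\in[l],j\in[b]}\lfloor\log_2(\tau_2(\omega,A,q)[i,j]+2)\rfloor\le 33\,b\,l\}$; $\tau(\omega,A):=(\tau_2(\omega,A,q(\omega,A)),\,q(\omega,A))$. *)

From HB Require Import structures.
From mathcomp Require Import all_boot all_order all_algebra.
From mathcomp Require Import zify.
Set Implicit Arguments. Unset Strict Implicit. Unset Printing Implicit Defensive.
Import Order.TTheory GRing.Theory Num.Theory.
Local Open Scope ring_scope.

Record psi (n b : nat) := Psi {
  psi_m : nat;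
  psi_f : 'I_n -> nat;
  psi_g : 'I_n -> 'I_psi_m;
  psi_h : 'I_psi_m -> 'I_b }.

Definition state (l b : nat) := ('M[int]_(l, b) * nat)%type.

(* floor(log2(z + 2)) ; for the relevant entries z >= -1 so z + 2 >= 1. *)
Definition lg2p2 (z : int) : nat := trunc_log 2 (absz (z + 2)).

Definition cost (l b : nat) (B : 'M[int]_(l, b)) : nat :=
  (\sum_(i < l) \sum_(j < b) lg2p2 (B i j))%N.

Definition budget (l b : nat) : nat := (33 * b * l)%N.

Definition decr (l b : nat) (B : 'M[int]_(l, b)) : 'M[int]_(l, b) :=
  \matrix_(i, j) Num.max (B i j - 1) (-1).

(* the while loop of compress, run with fuel *)
Fixpoint compress_loop (l b : nat) (fuel : nat) (B : 'M[int]_(l, b)) (q : nat)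
  : state l b :=
  if (budget l b < cost B)%N then
    match fuel with
    | O => (B, q)
    | S k => compress_loop k (decr B) q.+1
    end
  else (B, q).

(* fuel sufficient for the loop to terminate: after (max_ij |B i j|) + 1
   iterations every entry equals -1 and the cost is 0. *)
Definition compress_fuel (l b : nat) (B : 'M[int]_(l, b)) : nat :=
  (\sum_(i < l) \sum_(j < b) absz (B i j)).+1.

Definition compress (l b : nat) (s : state l b) : state l b :=
  compress_loop (compress_fuel s.1) s.1 s.2.

Definition single_sketch (n l b : nat) (x : 'I_n) (om : 'I_l -> psi n b) : state l b :=
  compress ((\matrix_(i, j)
     if j == psi_h (psi_g (om i) x) then ((psi_f (om i) x)%:Z) else -1), 0%N).

Definition merge_sketch (l b : nat) (sa sb : state l b) : state l b :=
  let q := maxn sa.2 sb.2 in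
  compress ((\matrix_(i, j) Num.max (sa.1 i j + sa.2%:Z - q%:Z)
                                    (sb.1 i j + sb.2%:Z - q%:Z)), q).

Definition tau0 (n b : nat) (p : psi n b) (A : {set 'I_n}) (j : 'I_b) : int :=
  \big[Num.max/(-1)]_(a in A | psi_h (psi_g p a) == j) (psi_f p a)%:Z.

Definition tau1 (n b : nat) (p : psi n b) (A : {set 'I_n}) (q : nat) (j : 'I_b) : int :=
  Num.max (tau0 p A j - q%:Z) (-1).

Definition tau2 (n l b : nat) (om : 'I_l -> psi n b) (A : {set 'I_n}) (q : nat)
  : 'M[int]_(l, b) := \matrix_(i, j) tau1 (om i) A q j.

Lemma tau_q_exists (n l b : nat) (om : 'I_l -> psi n b) (A : {set 'I_n}) :
  exists q : nat, (cost (tau2 om A q) <= budget l b)%N.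
Proof.
exists (\sum_(i < l) \sum_(a < n) psi_f (om i) a).+1%N.
set S := (\sum_(i < l) \sum_(a < n) psi_f (om i) a)%N.
have H : forall i j, tau2 om A S.+1 i j = -1.
  move=> i j; rewrite mxE /tau1.
  have Hle : tau0 (om i) A j <= S%:Z.
    have HfS : forall a, (psi_f (om i) a <= S)%N.
      move=> a; rewrite /S (bigD1 i) //= (bigD1 a) //= -addnA; exact: leq_addr.
    rewrite /tau0; apply: (big_ind (fun z => z <= S%:Z)).
    - by [].
    - by move=> x y Hx Hy; rewrite ge_max Hx Hy.
    - by move=> a _; rewrite lez_nat.
  apply/eqP; rewrite eq_le ge_max le_max !lexx !orbT !andbT.
  move: Hle; rewrite -[S.+1]addn1 PoszD; lia.
have -> : cost (tau2 om A S.+1) = 0%N.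
  rewrite /cost; apply: big1 => i _; apply: big1 => j _.
  by rewrite H /lg2p2.
by [].
Qed.

Definition qmin (n l b : nat) (om : 'I_l -> psi n b) (A : {set 'I_n}) : nat :=
  ex_minn (tau_q_exists om A).

Definition tau (n l b : nat) (om : 'I_l -> psi n b) (A : {set 'I_n}) : state l b :=
  (tau2 om A (qmin om A), qmin om A).

(* Both sketches are instances of [tau2 om A k, k] for the right set A and some
   shift k <= qmin om A: the singleton table is [tau2 om [set x] 0], and since
   [tau0] turns unions into pointwise maxima, the rescaled maximum in [merge] is
   [tau2 om (A1 :|: A2) (maxn q1 q2)].  One round of [compress] maps
   [tau2 om A k] to [tau2 om A k.+1], and the budget test fails exactly from
   [k = qmin om A] on, so [compress] lands on [tau om A] provided it has enough
   fuel and starts below [qmin om A]; the latter holds because [qmin] is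
   monotone in A. *)
From mathcomp Require Import all_boot all_order all_algebra.
From mathcomp Require Import zify.
Set Implicit Arguments. Unset Strict Implicit. Unset Printing Implicit Defensive.
Import Order.TTheory GRing.Theory Num.Theory.
Local Open Scope ring_scope.

Section Tau0.
Variables (n b : nat) (p : psi n b).

Lemma tau0_natmaxE A j :
  tau0 p A j = (\max_(a in A | psi_h (psi_g p a) == j) (psi_f p a).+1)%N%:Z - 1.
Proof.
by apply: (big_rec2 (fun x (y : nat) => x = y%:Z - 1)) => // a x y _ ->; lia.
Qed.

Lemma tau0_ge_m1 A j : -1 <= tau0 p A j.
Proof. by rewrite tau0_natmaxE; lia. Qed.

Lemma tau0U A1 A2 j :
  tau0 p (A1 :|: A2) j = Num.max (tau0 p A1 j) (tau0 p A2 j).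
Proof.
have maxU : (\max_(a in A1 :|: A2 | psi_h (psi_g p a) == j) (psi_f p a).+1 =
    maxn (\max_(a in A1 | psi_h (psi_g p a) == j) (psi_f p a).+1)
         (\max_(a in A2 | psi_h (psi_g p a) == j) (psi_f p a).+1))%N.
  rewrite big_mkcond [in RHS]big_mkcond [X in maxn _ X]big_mkcond -big_split.
  apply: eq_bigr => a _; rewrite in_setU.
  by case: (a \in A1); case: (a \in A2); case: (_ == j); rewrite /= ?maxnn.
by rewrite !tau0_natmaxE maxU; move: (bigop _ _ _) (bigop _ _ _) => x y; lia.
Qed.

Lemma tau0S (A B : {set 'I_n}) j : A \subset B -> tau0 p A j <= tau0 p B j.
Proof. by move/setUidPr <-; rewrite tau0U le_max lexx. Qed.

Lemma tau0_set1 x j :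
  tau0 p [set x] j = if psi_h (psi_g p x) == j then (psi_f p x)%:Z else -1.
Proof.
rewrite tau0_natmaxE big_mkcondr big_set1.
by case: (_ == j) => /=; lia.
Qed.

Lemma tau1_merge A1 A2 q1 q2 j :
  Num.max (tau1 p A1 q1 j + q1%:Z - (maxn q1 q2)%:Z)
          (tau1 p A2 q2 j + q2%:Z - (maxn q1 q2)%:Z)
  = tau1 p (A1 :|: A2) (maxn q1 q2) j.
Proof.
rewrite /tau1 tau0U.
by have := tau0_ge_m1 A1 j; have := tau0_ge_m1 A2 j; lia.
Qed.

End Tau0.

Lemma lg2p2_le (x y : int) : -1 <= x -> x <= y -> (lg2p2 x <= lg2p2 y)%N.
Proof. by move=> x_ge y_ge; apply: leq_trunc_log; lia. Qed.

Lemma cost_le (l b : nat) (B C : 'M[int]_(l, b)) :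
  (forall i j, -1 <= B i j <= C i j) -> (cost B <= cost C)%N.
Proof.
by move=> BC; apply: leq_sum => i _; apply: leq_sum => j _;
  case/andP: (BC i j); apply: lg2p2_le.
Qed.

Lemma cost_m1 (l b : nat) (B : 'M[int]_(l, b)) :
  (forall i j, B i j = -1) -> cost B = 0%N.
Proof. by move=> B_m1; apply: big1 => i _; apply: big1 => j _; rewrite B_m1. Qed.

Lemma absz_lt_compress_fuel (l b : nat) (B : 'M[int]_(l, b)) i j :
  (absz (B i j) < compress_fuel B)%N.
Proof. by rewrite ltnS (bigD1 i) //= (bigD1 j) //= -addnA leq_addr. Qed.

Section Compress.
Variables (n l b : nat) (om : 'I_l -> psi n b).

Lemma qmin_budget A : (cost (tau2 om A (qmin om A)) <= budget l b)%N.
Proof. by rewrite /qmin; case: ex_minnP. Qed.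

Lemma qmin_min A k : (cost (tau2 om A k) <= budget l b)%N -> (qmin om A <= k)%N.
Proof. by rewrite /qmin; case: ex_minnP => m _; apply. Qed.

Lemma decr_tau2 A k : decr (tau2 om A k) = tau2 om A k.+1.
Proof. by apply/matrixP => i j; rewrite !mxE /tau1; lia. Qed.

Lemma qminS (A B : {set 'I_n}) : A \subset B -> (qmin om A <= qmin om B)%N.
Proof.
move=> AB; apply/qmin_min/(leq_trans _ (qmin_budget B))/cost_le => i j.
rewrite !mxE /tau1; have := tau0S (om i) j AB; lia.
Qed.

Lemma compress_loop_tau2 A fuel k :
  (k <= qmin om A)%N -> (qmin om A - k <= fuel)%N ->
  compress_loop fuel (tau2 om A k) k = tau om A.
Proof.
elim: fuel k => [|fuel IH] k k_le fuel_ge /=.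
  have -> : k = qmin om A by lia.
  by rewrite ltnNge qmin_budget.
case: ifP => [over|]; last first.
  by move/negbT; rewrite -leqNgt => /qmin_min qk; have -> : k = qmin om A by lia.
have k_lt : (k < qmin om A)%N.
  by rewrite ltn_neqAle k_le andbT; apply: contraTneq over => ->;
    rewrite -leqNgt qmin_budget.
by rewrite decr_tau2; apply: IH; lia.
Qed.

(* Just below [qmin om A] the budget is exceeded, so some entry of the table
   there is nonnegative; at shift [k] that entry has size at least
   [qmin om A - k - 1]. *)
Lemma compress_fuel_tau2 A k :
  (k <= qmin om A)%N -> (qmin om A - k <= compress_fuel (tau2 om A k))%N.
Proof.
move=> k_le; case q_eq: (qmin om A) => [|m] //.
have over : (budget l b < cost (tau2 om A m))%N.
  by rewrite ltnNge; apply/negP => /qmin_min; lia.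
have /existsP[i /existsP[j big_ij]] :
    [exists i, exists j, m%:Z <= tau0 (om i) A j].
  apply: contraLR over => /existsPn none_big.
  rewrite -leqNgt cost_m1 // => i j; rewrite mxE /tau1.
  by have /existsPn/(_ j) := none_big i; lia.
have := absz_lt_compress_fuel (tau2 om A k) i j; rewrite mxE /tau1; lia.
Qed.

Lemma compress_tau2 A k :
  (k <= qmin om A)%N -> compress (tau2 om A k, k) = tau om A.
Proof. by move=> k_le; apply: compress_loop_tau2 (compress_fuel_tau2 k_le). Qed.

Lemma single_sketch_tau x : single_sketch x om = tau om [set x].
Proof.
rewrite -(@compress_tau2 [set x] 0) //; congr (compress (_, _)).
apply/matrixP => i j; rewrite !mxE /tau1 tau0_set1 eq_sym.
by case: (_ == j); lia.
Qed.

Lemma merge_sketch_tau A1 A2 :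
  merge_sketch (tau om A1) (tau om A2) = tau om (A1 :|: A2).
Proof.
rewrite /merge_sketch /= -(@compress_tau2 _ (maxn (qmin om A1) (qmin om A2))).
  by congr (compress (_, _)); apply/matrixP => i j; rewrite !mxE tau1_merge.
by rewrite geq_max !qminS // (subsetUl, subsetUr).
Qed.

End Compress.

Theorem lemma6 (n l b : nat) (Psi_set : psi n b -> Prop)
  (om : 'I_l -> psi n b) (Hom : forall i, Psi_set (om i)) :
  (forall x : 'I_n, single_sketch x om = tau om [set x]) /\
  (forall A1 A2 : {set 'I_n}, A1 != set0 -> A2 != set0 ->
     merge_sketch (tau om A1) (tau om A2) = tau om (A1 :|: A2)).
Proof.
split; first exact: single_sketch_tau.
by move=> A1 A2 _ _; apply: merge_sketch_tau.
Qed.
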